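(* For all integers $q \ge d \ge 2$, $B(q,d,2) = \left\lceil \frac{q-1}{d-1}\right\rceil$; that is, for every $f:\binom{[q]}{d}\to\{0,1\}$ there are $b=\lceil \frac{q-1}{d-1}\rceil$ sets $S_1,\dots,S_b\in\binom{[q]}{d}$ with $S_1\cup\dots\cup S_b=[q]$ on which $f$ is constant, and this number cannot be decreased in general.
   Context: $\binom{[q]}{d}$ denotes the family of $d$-element subsets of $[q]=\{1,\dots,q\}$. A function $f:\binom{[q]}{d}\to[c]$ has a $t$-cover if there exist $S_1,\dots,S_t\in\binom{[q]}{d}$ (not necessarily distinct) with $S_1\cup\dots\cup S_t=[q]$ and $f(S_1)=\dots=f(S_t)$. $B(q,d,c)$ is the minimum $t$ such that every $f:\binom{[q]}{d}\to[c]$ has a $t$-cover. *)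

From mathcomp Require Import all_boot.
Set Implicit Arguments. Unset Strict Implicit. Unset Printing Implicit Defensive.

(* A colouring f of the d-subsets of [q] = 'I_q with c colours ('I_c).
   f is given on all subsets of 'I_q; only its values on d-subsets matter. *)
Definition has_cover (q d c t : nat) (f : {set 'I_q} -> 'I_c) : Prop :=
  exists S : 'I_t -> {set 'I_q},
    [/\ forall i, #|S i| = d,
        \bigcup_(i < t) S i = [set: 'I_q]
      & forall i j, f (S i) = f (S j)].

Definition is_B (q d c t : nat) : Prop :=
  (forall f : {set 'I_q} -> 'I_c, has_cover d t f) /\
  (forall t', (forall f : {set 'I_q} -> 'I_c, has_cover d t' f) -> t <= t').

Definition ceil_div (m n : nat) : nat := (m + n.-1) %/ n.

(* Upper bound, by induction on k: a set U with d <= #|U| <= 1 + k (d - 1) is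
   covered by k d-subsets of U of one colour.  If U is not monochromatic,
   exchanging points one at a time between two d-subsets of different colours
   yields a (d-1)-set I with one-point extensions of both colours, so an anchor
   R inside I, of size min (d - 1, #|U| - d), lies in d-subsets of U of every
   occurring colour.  Cover U \ R by k - 1 sets of a common colour and add a set
   of that colour containing R.
   Lower bound: colour S by whether it contains a fixed point x; a monochromatic
   cover then consists of sets through x, which cover at most 1 + t (d - 1)
   points. *)

From mathcomp Require Import all_boot zify.

Set Implicit Arguments.
Unset Strict Implicit.
Unset Printing Implicit Defensive.

Lemma leq_ceil_div m n t : 0 < n -> (ceil_div m n <= t) = (m <= t * n).
Proof. by move=> n_gt0; rewrite /ceil_div -ltnS ltn_divLR //; lia. Qed.

Lemma ord2_cases (a b c : 'I_2) : a != b -> c = a \/ c = b.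
Proof.
by case: a b c => [[|[|?]] ?] [[|[|?]] ?] [[|[|?]] ?] //= _;
  [left | right | right | left]; apply: val_inj.
Qed.

Section FinsetCardinals.

Variable T : finType.

Lemma exists_set_between (A B : {set T}) n :
  A \subset B -> #|A| <= n <= #|B| ->
  exists C : {set T}, [/\ A \subset C, C \subset B & #|C| = n].
Proof.
elim: n => [|n IHn] sAB /andP[leAn lenB].
  by exists A; split => //; apply/eqP; rewrite -leqn0.
have [ltnA | leAn'] := ltnP n #|A|; first by exists A; split => //; lia.
have [C [sAC sCB cardC]] := IHn sAB (introT andP (conj leAn' (ltnW lenB))).
have : B :\: C != set0 by rewrite -card_gt0 cardsD (setIidPr sCB); lia.
case/set0Pn => x /setDP[xB xNC].
exists (x |: C); split; first exact: subset_trans sAC (subsetUr _ _).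
  by rewrite subUset sub1set xB.
by rewrite cardsU1 xNC cardC.
Qed.

Lemma card_bigcup_leq_sum t (S : 'I_t -> {set T}) :
  #|\bigcup_(i < t) S i| <= \sum_(i < t) #|S i|.
Proof.
elim/big_ind2: _ => [|m A n B leAm leBn|//]; first by rewrite cards0.
by rewrite (leq_trans (leq_card_setU A B).1) ?leq_add.
Qed.

Lemma card_bigcup_common_point (x : T) d t (S : 'I_t -> {set T}) :
  (forall i, x \in S i) -> (forall i, #|S i| = d) ->
  #|\bigcup_(i < t) S i| <= 1 + t * (d - 1).
Proof.
move=> xS cardS.
have sub : \bigcup_(i < t) S i \subset x |: \bigcup_(i < t) (S i :\ x).
  apply/subsetP => z; case/bigcupP => i _ zS; rewrite !inE.
  by case: eqVneq => //= zx; apply/bigcupP; exists i; rewrite ?inE ?zx.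
apply: leq_trans (subset_leq_card sub) _; rewrite cardsU1 leq_add ?leq_b1 //.
apply: leq_trans (card_bigcup_leq_sum _) _.
rewrite (eq_bigr (fun=> d - 1)) ?sum_nat_const ?card_ord // => i _.
by have := cardsD1 x (S i); rewrite xS cardS; lia.
Qed.

End FinsetCardinals.

Section ColourSwitch.

Variables (T : finType) (C : eqType) (f : {set T} -> C) (U : {set T}) (d : nat).

Lemma colour_switch (S S' : {set T}) :
  S \subset U -> S' \subset U -> #|S| = d -> #|S'| = d -> f S != f S' ->
  exists (I : {set T}) (x y : T),
    [/\ I \subset U, #|I| = d.-1, x \in U :\: I, y \in U :\: I
      & f (x |: I) != f (y |: I)].
Proof.
move: {2}#|S :\: S'| (erefl #|S :\: S'|) => n.
elim: n S => [|n IHn] S cardSS' sSU sS'U cardS cardS' fSS'.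
  have sSS' : S \subset S' by rewrite -setD_eq0 -cards_eq0 cardSS'.
  have eqSS' : S == S' by rewrite eqEcard sSS' cardS cardS' leqnn.
  by rewrite (eqP eqSS') eqxx in fSS'.
have /set0Pn[x /setDP[xS xNS']] : S :\: S' != set0 by rewrite -card_gt0 cardSS'.
have /set0Pn[y /setDP[yS' yNS]] : S' :\: S != set0.
  by rewrite -card_gt0 cardsD setIC cardS' -cardS -cardsD cardSS'.
have cardSx : #|S :\ x|.+1 = d by rewrite -cardS (cardsD1 x S) xS.
have yNSx : y \notin S :\ x by rewrite !inE (negbTE yNS) andbF.
have [fS_eq | fS_neq] := eqVneq (f S) (f (y |: (S :\ x))); last first.
  exists (S :\ x), x, y; split; rewrite ?setD1K -?cardSx //.
  - exact: subset_trans (subsetDl _ _) sSU.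
  - by rewrite !inE eqxx (subsetP sSU).
  - by rewrite inE yNSx (subsetP sS'U).
apply: (IHn (y |: (S :\ x))) => //; last by rewrite -fS_eq.
- have -> : (y |: (S :\ x)) :\: S' = (S :\: S') :\ x.
    apply/setP => z; rewrite !inE.
    by case: (eqVneq z y) => [->|_]; rewrite ?yS' /=;
      case: (z \in S'); rewrite /= ?andbF.
  by have := cardsD1 x (S :\: S'); rewrite !inE xS xNS' cardSS' => -[].
- by rewrite subUset sub1set (subsetP sS'U) // (subset_trans (subsetDl _ _)).
- by rewrite cardsU1 yNSx.
Qed.

End ColourSwitch.

Section TwoColourCover.

Variables (T : finType) (f : {set T} -> 'I_2) (d : nat).
Hypothesis d_gt0 : 0 < d.

Lemma exists_anchor (U : {set T}) r : r < d -> d <= #|U| ->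
  exists R : {set T}, [/\ R \subset U, #|R| = r &
    forall S : {set T}, S \subset U -> #|S| = d ->
      exists X : {set T}, [/\ R \subset X, X \subset U, #|X| = d & f X = f S]].
Proof.
move=> ltrd leUd.
have [/existsP[S /existsP[S' /and5P[sSU sS'U /eqP cardS /eqP cardS' fSS']]] | mono]
  := boolP [exists S : {set T}, exists S' : {set T},
              [&& S \subset U, S' \subset U, #|S| == d, #|S'| == d & f S != f S']].
  have [I [x [y [sIU cardI /setDP[xU xNI] /setDP[yU yNI] fxy]]]] :=
    colour_switch sSU sS'U cardS cardS' fSS'.
  have [R [_ sRI cardR]] :
      exists R : {set T}, [/\ set0 \subset R, R \subset I & #|R| = r].
    apply: exists_set_between; rewrite ?sub0set // cards0 cardI.
    by rewrite leq0n -ltnS (ltn_predK ltrd).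
  have extend z : z \in U -> z \notin I ->
      [/\ R \subset z |: I, z |: I \subset U & #|z |: I| = d].
    move=> zU zNI; rewrite subUset sub1set zU sIU cardsU1 zNI cardI.
    rewrite add1n (ltn_predK ltrd); split => //.
    exact: subset_trans sRI (subsetUr _ _).
  exists R; split => //; first exact: subset_trans sRI sIU.
  move=> S0 _ _; have [-> | ->] := ord2_cases (f S0) fxy.
  - by have [? ? ?] := extend x xU xNI; exists (x |: I).
  - by have [? ? ?] := extend y yU yNI; exists (y |: I).
have [R [_ sRU cardR]] :
    exists R : {set T}, [/\ set0 \subset R, R \subset U & #|R| = r].
  by apply: exists_set_between; rewrite ?sub0set // cards0; lia.
exists R; split => // S0 sS0U cardS0.
have [X [sRX sXU cardX]] :
    exists X : {set T}, [/\ R \subset X, X \subset U & #|X| = d].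
  by apply: exists_set_between; rewrite // cardR; lia.
exists X; split => //.
move/existsPn/(_ X)/existsPn/(_ S0): mono.
by rewrite sXU sS0U cardX cardS0 eqxx /= negbK => /eqP.
Qed.

Lemma monochromatic_cover k (U : {set T}) : d <= #|U| <= 1 + k.+1 * (d - 1) ->
  exists c : 'I_2, exists s : seq {set T}, [/\ size s = k.+1,
    {in s, forall S : {set T}, [/\ #|S| = d, S \subset U & f S = c]}
    & U \subset \bigcup_(S <- s) S].
Proof.
elim: k U => [|k IHk] U /andP[leUd leUk].
  exists (f U), [:: U]; split; rewrite ?big_seq1 //.
  by move=> S; rewrite inE => /eqP->; split => //; lia.
set r := minn (d - 1) (#|U| - d).
have ltrd : r < d by rewrite /r; lia.
have [R [sRU cardR anchorR]] := exists_anchor ltrd leUd.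
have cardUR : #|U :\: R| = #|U| - r by rewrite cardsD (setIidPr sRU) cardR.
have [c [[|S0 s] [//= sizes cols cov]]] : exists c : 'I_2, exists s : seq {set T},
    [/\ size s = k.+1,
      {in s, forall S : {set T}, [/\ #|S| = d, S \subset U :\: R & f S = c]}
      & U :\: R \subset \bigcup_(S <- s) S].
  by apply: IHk; rewrite cardUR /r !mulSn in leUk *; nia.
have [cardS0 /subset_trans sS0U colS0] := cols S0 (mem_head _ _).
have [X [sRX sXU cardX colX]] := anchorR S0 (sS0U _ (subsetDl _ _)) cardS0.
exists c, [:: X, S0 & s]; split; first by rewrite /= sizes.
  move=> S; rewrite inE => /predU1P[-> | /cols[cardS sSUR colS]].
    by rewrite colX.
  by split => //; apply: subset_trans sSUR (subsetDl _ _).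
apply/subsetP => z zU; rewrite big_cons inE.
have [zR | zNR] := boolP (z \in R); first by rewrite (subsetP sRX).
by rewrite (subsetP cov) ?orbT // inE zNR.
Qed.

End TwoColourCover.

Lemma has_cover_two_colours q d t (f : {set 'I_q} -> 'I_2) :
  0 < d -> 0 < t -> d <= q <= 1 + t * (d - 1) -> has_cover d t f.
Proof.
move=> d_gt0; case: t => // t _.
rewrite -[q in _ <= q <= _]card_ord -cardsT => hq.
have [c [s [sizes cols cov]]] := monochromatic_cover f d_gt0 hq.
have s_i (i : 'I_t.+1) : nth set0 s i \in s by rewrite mem_nth ?sizes.
exists (fun i => nth set0 s i); split.
- by move=> i; have [] := cols _ (s_i i).
- apply/eqP; rewrite eqEsubset subsetT.
  by move: cov; rewrite (big_nth set0) sizes big_mkord.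
- move=> i j; have [_ _ ->] := cols _ (s_i i).
  by have [_ _ ->] := cols _ (s_i j).
Qed.

Lemma point_colouring_cover_bound q d c t (x : 'I_q) (a b : 'I_c) : a != b ->
  has_cover d t (fun S => if x \in S then a else b) -> q <= 1 + t * (d - 1).
Proof.
move=> neq_ab [S [cardS cov colS]].
have /bigcupP[i0 _ xS0] : x \in \bigcup_(i < t) S i by rewrite cov inE.
have xS i : x \in S i.
  move: (colS i i0); rewrite xS0; case: (x \in S i) => // /eqP.
  by rewrite eq_sym (negbTE neq_ab).
by rewrite -[q]card_ord -cardsT -cov; apply: card_bigcup_common_point xS cardS.
Qed.

Theorem lemmaA1 (q d : nat) : 2 <= d -> d <= q ->
  is_B q d 2 (ceil_div (q - 1) (d - 1)).
Proof.
move=> d_ge2 le_dq; have d1_gt0 : 0 < d - 1 by lia.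
split=> [f | t cover_t].
  apply: has_cover_two_colours; first by lia.
    by rewrite ltnNge leq_ceil_div //; lia.
  have := leqnn (ceil_div (q - 1) (d - 1)); rewrite leq_ceil_div //; lia.
have q_gt0 : 0 < q by lia.
have := point_colouring_cover_bound (x := Ordinal q_gt0)
  (isT : ord_max != ord0 :> 'I_2) (cover_t _).
by rewrite leq_ceil_div //; lia.
Qed.
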